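(* Suppose $\{0,1\}\subseteq\Sigma$ and $m\ge2$. Let $\pi=x_0^{n_0}x_1^{n_1}\cdots x_k^{n_k}$ with distinct variables $x_0,\dots,x_k$ and $n_0,\dots,n_k\in\{2,\dots,m\}$. Suppose that for some positive integers $\ell,i_1,\dots,i_\ell$, $w:=(01)^{i_1}(0^21)^{i_2}\cdots(0^\ell1)^{i_\ell}\in L(\pi)$. For $j\in\{1,\dots,\ell\}$ let $I_j$ be the interval of positions of $w$ occupied by the factor $(0^j1)^{i_j}$ in this factorisation, and for $j\in\{0,\dots,k\}$ let $J_j$ be the interval of positions of $\pi$ occupied by $x_j^{n_j}$. Let $h$ be any substitution with $h(\pi)=w$ and $h(x_i)\neq\varepsilon$ for all $i\in\{0,\dots,k\}$. Then: (i) for every $j\in\{0,\dots,k\}$, $h(x_j)=(0^{j'}1)^{i'}$ for some $j'\in\{1,\dots,\ell\}$ and $i'\in\{1,\dots,i_{j'}\}$; (ii) for every $j\in\{1,\dots,\ell\}$ there are $g_j\in\{0,\dots,k\}$ and $h_j\in\{0,\dots,k-g_j\}$ such that $I_j$ is the disjoint union $\bigcup_{l=0}^{h_j}\mathcal I_{h,\pi}(J_{g_j+l})$.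
   Context: Fix a countably infinite set $X$ of variables and an alphabet $\Sigma$ disjoint from $X$. A pattern is a nonempty finite string over $X\cup\Sigma$. A substitution is a morphism $h:(X\cup\Sigma)^*\to\Sigma^*$ fixing letters; $L(\pi)$ (erasing pattern language) is the set of all $h(\pi)$. For a substitution $h$ and a pattern $\pi$, $\mathcal I_{h,\pi}$ maps a closed interval $[p,q]$ of positions of $\pi$ to the closed interval of positions of $h(\pi)$ occupied by the factor $h(\pi[p]\cdots\pi[q])$ in $h(\pi)=h(\pi[1])\cdots h(\pi[|\pi|])$. *)

From mathcomp Require Import all_boot.
Set Implicit Arguments. Unset Strict Implicit. Unset Printing Implicit Defensive.

(* Symbols of patterns over X ∪ Σ, with X = nat (countably infinite). *)
Inductive sym (S : Type) := Var of nat | Let of S.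
Arguments Var {S} _.
Arguments Let {S} _.

(* A substitution is determined by its values on variables; letters are fixed. *)
Definition subst (S : Type) := nat -> seq S.

Definition happly (S : Type) (h : subst S) (p : seq (sym S)) : seq S :=
  flatten (map (fun s => match s with Var x => h x | Let a => [:: a] end) p).

(* Erasing pattern language membership. *)
Definition inL (S : Type) (p : seq (sym S)) (w : seq S) : Prop :=
  exists h : subst S, happly h p = w.

(* Closed intervals [p,q] of 1-based positions, as pairs; membership. *)
Definition in_itv (I : nat * nat) (x : nat) : bool := (I.1 <= x) && (x <= I.2).

(* I_{h,pi}([p,q]) : positions of h(pi) occupied by h(pi[p]...pi[q]). *)
Definition Ihpi (S : Type) (h : subst S) (pi : seq (sym S)) (I : nat * nat)
  : nat * nat :=
  ((size (happly h (take I.1.-1 pi))).+1, size (happly h (take I.2 pi))).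

Definition power_pattern (S : Type) (k : nat) (x n : nat -> nat) : seq (sym S) :=
  flatten [seq nseq (n j) (Var (x j)) | j <- iota 0 k.+1].

Definition Jint (n : nat -> nat) (j : nat) : nat * nat :=
  ((\sum_(t < j) n t).+1, \sum_(t < j.+1) n t).

Definition blk (S : Type) (zero one : S) (j i : nat) : seq S :=
  flatten (nseq i (rcons (nseq j zero) one)).

Definition wword (S : Type) (zero one : S) (l : nat) (i : nat -> nat) : seq S :=
  flatten [seq blk zero one j (i j) | j <- iota 1 l].

(* I_j : interval of positions of w occupied by (0^j 1)^{i_j} (1 <= j <= l);
   block t has length (t+1) * i_t. *)
Definition Iint (i : nat -> nat) (j : nat) : nat * nat :=
  ((\sum_(1 <= t < j) t.+1 * i t).+1, \sum_(1 <= t < j.+1) t.+1 * i t).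

From mathcomp Require Import all_boot zify.
Set Implicit Arguments. Unset Strict Implicit. Unset Printing Implicit Defensive.

(* Write 0^t 1 for a "unit"; w is the concatenation of the units
   listed by the nondecreasing sequence ts = 1^(i_1) 2^(i_2) ... l^(i_l), and
   h(pi) is the concatenation of the proper powers u_j^(n_j), u_j = h(x_j).
   Reading h(pi) = w from left to right we show that every factor u_j^(n_j)
   starts and ends at a unit boundary (a cut inside a run of zeros would leave
   a remainder 0^b 1 ... whose first unit is strictly shorter than all later
   ones, and such a word is never a product of proper powers), and that a
   proper power of units coded by a sorted list is the power of a single
   repeated unit, so u_j = (0^t 1)^a.  This yields a factorisation of ts into
   constant runs aligned with the factors of pi, from which (i) follows by
   counting units and (ii) by locating the boundary of each block (0^j 1)^(i_j)
   among the prefix lengths of h(pi), which cut w into consecutive intervals. *)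

Lemma sorted_suffix (ta : seq nat) t tc :
  sorted leq (ta ++ t :: tc) -> all (leq t) tc /\ sorted leq tc.
Proof.
rewrite sorted_cat_cons => /andP[_]; rewrite path_sortedE; last exact: leq_trans.
by case/andP.
Qed.

Lemma sorted_shortened_head (ta : seq nat) t tc c :
  sorted leq (ta ++ t :: tc) -> 0 < c <= t ->
  sorted leq tc /\ all (fun z => t - c < z) tc.
Proof.
move=> /sorted_suffix [t_le stc] /andP[c0 c_le]; split => //.
by apply: sub_all t_le => z /= t_le_z; lia.
Qed.

Lemma sorted_square_const (xs z : seq nat) :
  sorted leq (xs ++ xs ++ z) -> xs = nseq (size xs) (head 0 xs).
Proof.
case: xs => [|x xs] //; rewrite sorted_pairwise; last exact: leq_trans.
rewrite /= pairwise_cat => /andP[/allP x_le /and3P[/allP xs_le _ _]].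
congr (_ :: _); apply/all_pred1P/allP => y y_xs /=.
rewrite eqn_leq; apply/andP; split.
- by have /andP[] := xs_le y y_xs.
- by apply: x_le; rewrite mem_cat y_xs.
Qed.

Section UnitWords.
Variable S : eqType.
Variables zero one : S.
Hypothesis zero_neq_one : zero != one.

Definition unit_word (t : nat) : seq S := rcons (nseq t zero) one.
Definition units (ts : seq nat) : seq S := flatten (map unit_word ts).

Definition power (u : seq S) (n : nat) : seq S := flatten (nseq n u).
Definition powers (ps : seq (seq S * nat)) : seq S :=
  flatten [seq power p.1 p.2 | p <- ps].
Definition proper_power (p : seq S * nat) : bool := (p.1 != [::]) && (1 < p.2).

Lemma units_cons t ts : units (t :: ts) = nseq t zero ++ one :: units ts.
Proof. by rewrite /units /= /unit_word cat_rcons. Qed.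

Lemma units_cat ta tb : units (ta ++ tb) = units ta ++ units tb.
Proof. by rewrite /units map_cat flatten_cat. Qed.

Lemma unit_prefix_inj a b s s' :
  nseq a zero ++ one :: s = nseq b zero ++ one :: s' -> a = b /\ s = s'.
Proof.
elim: a b => [|a IH] [|b] //=.
- by case.
- by case => /eqP; rewrite eq_sym (negbTE zero_neq_one).
- by case => /eqP; rewrite (negbTE zero_neq_one).
- by case => /IH [-> ->].
Qed.

Lemma units_inj : injective units.
Proof.
elim=> [|t ts IH] [|t' ts'] //.
- by rewrite units_cons /units /=; case: t'.
- by rewrite units_cons /units /=; case: t.
- by rewrite !units_cons => /unit_prefix_inj [-> /IH ->].
Qed.

Lemma last_units ts : last one (units ts) = one.
Proof. by elim: ts => //= t ts IH; rewrite last_cat last_rcons. Qed.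

Lemma last_zeros d s c : 0 < c -> last d (s ++ nseq c zero) = zero.
Proof. by case: c => // c _; rewrite last_cat /=; elim: c. Qed.

Lemma last_cat_nonnil d d' (v u : seq S) : u != [::] -> last d (v ++ u) = last d' u.
Proof. by case: u => // a u _; rewrite last_cat. Qed.

Lemma power_rcons u n : power u n.+1 = power u n ++ u.
Proof.
elim: n => [|n IH]; first by rewrite /power /= cats0.
by move: IH; rewrite /power /= => IH; rewrite -catA -IH.
Qed.

Lemma power_units_nseq a t n : power (units (nseq a t)) n = units (nseq (a * n) t).
Proof.
elim: n => [|n IH]; first by rewrite muln0.
by rewrite /power /= -/(power _ n) IH mulnS nseqD units_cat.
Qed.

Lemma zero_run_split t v r s : nseq t zero ++ one :: s = v ++ r ->
  (size v <= t /\ v = nseq (size v) zero /\ r = nseq (t - size v) zero ++ one :: s)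
  \/ (exists v', v = nseq t zero ++ one :: v' /\ s = v' ++ r).
Proof.
elim: t v => [|t IH] [|y v] /=.
- by move=> <-; left.
- by case=> <- ->; right; exists v.
- by move=> <-; left.
- case=> <- /IH [[v_le [v_zeros r_eq]]|[v' [v_eq s_eq]]].
  + by left; rewrite ltnS v_le -v_zeros r_eq.
  + by right; exists v'; rewrite v_eq.
Qed.

Lemma units_split ts v r : units ts = v ++ r -> exists ta tb, ts = ta ++ tb /\
  ((v = units ta /\ r = units tb) \/ exists t tc c, [/\ tb = t :: tc, 0 < c <= t,
     v = units ta ++ nseq c zero & r = units ((t - c) :: tc)]).
Proof.
elim: ts v r => [|t ts IH] v r.
  by case: v => [|y v]; case: r => [|z r] //= _; exists [::], [::]; split => //; left.
rewrite units_cons => /zero_run_split [[v_le [v_zeros r_eq]]|[v' [v_eq s_eq]]].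
- exists [::], (t :: ts); split => //.
  case v_size: (size v) v_le v_zeros r_eq => [|c] v_le v_zeros r_eq.
  + by left; rewrite v_zeros r_eq subn0 units_cons.
  + by right; exists t, ts, c.+1; rewrite units_cons v_zeros.
- have [ta [tb [ts_eq [[v'_eq r_eq]|[t' [tc [c [tb_eq c_le v'_eq r_eq]]]]]]]] := IH _ _ s_eq.
  + by exists (t :: ta), tb; rewrite ts_eq; split => //; left; rewrite v_eq v'_eq units_cons.
  + exists (t :: ta), tb; rewrite ts_eq; split => //; right; exists t', tc, c.
    by rewrite v_eq v'_eq units_cons -catA.
Qed.

Lemma units_cut_at_one ts v r : units ts = v ++ r -> last one v = one ->
  exists ta tb, [/\ ts = ta ++ tb, v = units ta & r = units tb].
Proof.
move=> /units_split [ta [tb [ts_eq [[v_eq r_eq]|[t [tc [c [_ c_le v_eq _]]]]]]]] v_one.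
  by exists ta, tb.
move: v_one; rewrite v_eq last_zeros; last by case/andP: c_le.
by move/eqP; rewrite (negbTE zero_neq_one).
Qed.

Lemma power_of_units u n X : u != [::] -> 1 < n -> sorted leq X ->
  power u n = units X ->
  exists a t, [/\ 0 < a, u = units (nseq a t) & X = nseq (a * n) t].
Proof.
move=> u0 n_gt1 sX uX.
have u_one : last one u = one.
  rewrite -(last_cat_nonnil one one (power u n.-1) u0) -power_rcons.
  by rewrite prednK ?(ltnW n_gt1) // uX last_units.
case: n n_gt1 uX => [|[|n]] // _ uX.
have [xa [xb [X_eq u_eq xb_eq]]] := units_cut_at_one (esym uX) u_one.
rewrite u_eq in u_one xb_eq.
have [xa' [xc [xb_eq' xa'_eq _]]] := units_cut_at_one (esym xb_eq) u_one.
move/units_inj: xa'_eq => xa'_eq; subst xa'.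
have xa_const : xa = nseq (size xa) (head 0 xa).
  by apply: (@sorted_square_const _ xc); rewrite -xb_eq' -X_eq.
have xa_size : 0 < size xa by move: u0; rewrite u_eq lt0n size_eq0; apply: contra => /eqP ->.
exists (size xa), (head 0 xa); rewrite -xa_const -u_eq; split => //.
by apply: units_inj; rewrite -uX u_eq {1}xa_const power_units_nseq.
Qed.

Lemma powers_neq_units_short_head ps b R :
  sorted leq R -> all (fun t => b < t) R -> all proper_power ps ->
  powers ps <> units (b :: R).
Proof.
elim: ps b R => [|[u n] ps IH] b R sR bR.
  by rewrite units_cons /powers /=; case: (nseq b zero).
move=> /andP[/andP[/= u0 n_gt1] ps_proper] psR.
have sbR : sorted leq (b :: R).
  rewrite /= path_sortedE ?sR ?andbT; last exact: leq_trans.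
  by apply: sub_all bR => z /ltnW.
have [ta [tb [bR_eq [[u_eq r_eq]|[t [tc [c [tb_eq c_le _ r_eq]]]]]]]] :=
  units_split (esym psR : units (b :: R) = power u n ++ powers ps).
- have [sta _] : sorted leq ta * sorted leq tb by apply: cat_sorted2; rewrite -bR_eq.
  have [a [t [a0 _ ta_eq]]] := power_of_units u0 n_gt1 sta u_eq.
  have an_gt1 : 1 < a * n by apply: leq_trans n_gt1 (leq_pmull _ a0).
  move: bR_eq bR; rewrite ta_eq; case: (a * n) an_gt1 => [|[|d]] // _ [<- ->] /=.
  by rewrite ltnn.
- rewrite bR_eq tb_eq in sbR; have [stc tc_gt] := sorted_shortened_head sbR c_le.
  exact: IH stc tc_gt ps_proper r_eq.
Qed.

Lemma powers_cut_aligned ts p ps : sorted leq ts -> all proper_power ps ->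
  units ts = p ++ powers ps ->
  exists ta tb, [/\ ts = ta ++ tb, p = units ta & powers ps = units tb].
Proof.
move=> sts ps_proper /units_split [ta [tb [ts_eq [[p_eq r_eq]|]]]].
  by exists ta, tb.
case=> t [tc [c [tb_eq c_le _ r_eq]]]; exfalso.
rewrite ts_eq tb_eq in sts; have [stc tc_gt] := sorted_shortened_head sts c_le.
exact: powers_neq_units_short_head stc tc_gt ps_proper r_eq.
Qed.

Lemma powers_units_factorisation ps ts : sorted leq ts -> all proper_power ps ->
  powers ps = units ts ->
  exists tss : seq (seq nat), [/\ size tss = size ps, ts = flatten tss,
   (forall g, powers (take g ps) = units (flatten (take g tss))) &
   (forall q, q < size ps -> exists a t, [/\ 0 < a,
      (nth ([::], 0) ps q).1 = units (nseq a t) &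
      nth [::] tss q = nseq (a * (nth ([::], 0) ps q).2) t])].
Proof.
elim: ps ts => [|[u n] ps IH] ts sts.
  by move=> _ ts_nil; exists [::]; split=> //; apply: units_inj; rewrite -ts_nil.
move=> /andP[/andP[/= u0 n_gt1] ps_proper] psE.
have [X [Y [ts_eq uX psY]]] :=
  powers_cut_aligned sts ps_proper (esym psE : units ts = power u n ++ powers ps).
rewrite ts_eq in sts; have [sX sY] := cat_sorted2 sts.
have [tss [tss_size Y_eq tss_take tss_nth]] := IH Y sY ps_proper psY.
have [a [t [a0 u_eq X_eq]]] := power_of_units u0 n_gt1 sX uX.
exists (X :: tss); split => /=.
- by rewrite tss_size.
- by rewrite ts_eq Y_eq.
- case=> [|g] //; rewrite -[powers _]/(power u n ++ powers (take g ps)).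
  by rewrite tss_take uX -units_cat.
- by case=> [|q] /=; [exists a, t | move/tss_nth].
Qed.

Lemma size_powers_take_mono ps :
  {homo (fun g => size (powers (take g ps))) : g g' / g <= g'}.
Proof.
move=> g g' le_gg'; rewrite /= -(subnKC le_gg') takeD /powers map_cat flatten_cat.
by rewrite size_cat leq_addr.
Qed.

End UnitWords.

Definition runs (f : nat -> nat) (js : seq nat) : seq nat :=
  flatten [seq nseq (f j) j | j <- js].

Lemma sorted_runs f js : sorted leq js -> sorted leq (runs f js).
Proof.
rewrite !sorted_pairwise; try exact: leq_trans.
elim: js => [|j js IH] //= /andP[/allP j_le pjs]; rewrite pairwise_cat IH // andbT.
apply/andP; split.
- apply/allP => z; rewrite mem_nseq => /andP[_ /eqP->]; apply/allP => y.
  by case/flatten_mapP => y' /j_le j_y'; rewrite mem_nseq => /andP[_ /eqP->].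
- by elim: (f j) => //= c ->; rewrite andbT; apply/allP => y; rewrite mem_nseq => /andP[_ /eqP->].
Qed.

Lemma count_runs f js t : uniq js -> count_mem t (runs f js) = (t \in js) * f t.
Proof.
elim: js => [|j js IH] //= /andP[j_js u_js]; rewrite count_cat count_nseq IH // in_cons.
rewrite /= eq_sym; case: eqVneq => [->|_] /=; last by [].
by rewrite (negbTE j_js) addn0.
Qed.

(* The unit 0^t 1 has length t + 1. *)
Lemma size_units_runs (S : eqType) (zero one : S) f js :
  size (units zero one (runs f js)) = \sum_(t <- js) t.+1 * f t.
Proof.
elim: js => [|j js IH]; first by rewrite big_nil.
rewrite big_cons /runs /= units_cat size_cat -/(runs f js) IH; congr (_ + _).
elim: (f j) => [|c IHc]; first by rewrite muln0.
by rewrite /= units_cons size_cat size_nseq /= IHc mulnS; lia.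
Qed.

Lemma filter_runs f js j :
  [seq t <- runs f js | t < j] = runs (fun t => (t < j) * f t) js.
Proof.
rewrite /runs filter_flatten -map_comp; congr flatten.
by apply: eq_map => t /=; rewrite filter_nseq.
Qed.

Lemma runs_threshold (tss : seq (seq nat)) j : sorted leq (flatten tss) ->
  (forall s, s \in tss -> exists c t, s = nseq c t) ->
  exists2 g, g <= size tss & flatten (take g tss) = [seq t <- flatten tss | t < j].
Proof.
elim: tss => [|s tss IH] /=; first by exists 0.
move=> sorted_tss const_tss; have [c [t s_eq]] := const_tss s (mem_head _ _); subst s.
have [|g g_le tss_g] := IH (cat_sorted2 sorted_tss).2.
  by move=> s' s'_in; apply: const_tss; rewrite in_cons s'_in orbT.
rewrite filter_cat filter_nseq.
case: (boolP ((t < j) || (c == 0))) => [low|].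
  by exists g.+1; rewrite //= tss_g; case/orP: low => [->|/eqP->]; rewrite ?mul1n ?muln0.
rewrite negb_or -leqNgt -lt0n => /andP[j_le c0]; exists 0 => //=.
move: sorted_tss; rewrite sorted_pairwise; last exact: leq_trans.
rewrite pairwise_cat => /and3P[/allP t_le _ _].
have /t_le /allP t_below : t \in nseq c t by rewrite mem_nseq c0 eqxx.
rewrite ltnNge j_le mul0n /= (eq_in_filter (a2 := pred0)) ?filter_pred0 // => z /t_below.
by rewrite /= ltnNge => tz; rewrite (leq_trans j_le tz).
Qed.

Lemma itv_cover (f : nat -> nat) a d p : {homo f : u v / u <= v} ->
  in_itv ((f a).+1, f (a + d.+1)) p <->
  exists2 t, t <= d & in_itv ((f (a + t)).+1, f (a + t).+1) p.
Proof.
move=> f_mono; rewrite /in_itv /=; split.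
- elim: d => [|d IH] /andP[lo hi].
    by exists 0; rewrite // addn0 lo -(addn1 a).
  case: (leqP p (f (a + d.+1))) => hi'.
    by have [t t_le p_in] := IH (introT andP (conj lo hi')); exists t => //; apply: leqW.
  by exists d.+1; rewrite // hi' -addnS.
- case=> t t_le /andP[lo hi]; apply/andP; split.
  + by apply: leq_ltn_trans lo; apply: f_mono; apply: leq_addr.
  + by apply: leq_trans hi _; apply: f_mono; rewrite -addnS leq_add2l.
Qed.

Lemma itv_disjoint (f : nat -> nat) u v p : {homo f : a b / a <= b} -> u != v ->
  in_itv ((f u).+1, f u.+1) p -> ~~ in_itv ((f v).+1, f v.+1) p.
Proof.
rewrite /in_itv /= => f_mono u_neq_v /andP[lo_u hi_u]; apply/negP => /andP[lo_v hi_v].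
by case: (ltngtP u v) u_neq_v => [/f_mono|/f_mono|]; rewrite ?eqxx //; lia.
Qed.

Section PowerPatterns.
Variable S : eqType.
Variables (h : subst S) (x n : nat -> nat).

Lemma happly_cat (p q : seq (sym S)) : happly h (p ++ q) = happly h p ++ happly h q.
Proof. by rewrite /happly map_cat flatten_cat. Qed.

Lemma happly_blocks js :
  happly h (flatten [seq nseq (n j) (Var (x j)) | j <- js]) =
  powers [seq (h (x j), n j) | j <- js].
Proof.
elim: js => [|j js IH] //=; rewrite happly_cat IH; congr (_ ++ _).
by rewrite /power; elim: (n j) => //= c IHc; rewrite -IHc.
Qed.

Lemma happly_take_power_pattern k g : g <= k.+1 ->
  happly h (take (\sum_(t < g) n t) (power_pattern S k x n)) =
  powers [seq (h (x j), n j) | j <- iota 0 g].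
Proof.
move=> g_le; rewrite /power_pattern -(subnKC g_le) iotaD map_cat flatten_cat.
rewrite take_size_cat ?happly_blocks // size_flatten /shape -map_comp.
rewrite (eq_map (g := n)) => [|j]; last by rewrite /= size_nseq.
by rewrite sumnE big_map -(big_mkord xpredT) /index_iota subn0.
Qed.

End PowerPatterns.

Lemma blk_units (S : eqType) (zero one : S) j c :
  blk zero one j c = units zero one (nseq c j).
Proof. by rewrite /blk /units map_nseq. Qed.

Lemma wword_units (S : eqType) (zero one : S) l (i : nat -> nat) :
  wword zero one l i = units zero one (runs i (iota 1 l)).
Proof.
rewrite /wword /runs; elim: (iota 1 l) => [|j js IH] //=.
by rewrite units_cat -IH blk_units.
Qed.

Section FactorisationOfW.
Variable S : eqType.
Variables zero one : S.
Hypothesis zero_neq_one : zero != one.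
Variables (k : nat) (x n : nat -> nat) (l : nat) (i : nat -> nat) (h : subst S).
Hypothesis n_gt1 : forall j, j <= k -> 1 < n j.
Hypothesis i_gt0 : forall j, 1 <= j <= l -> 0 < i j.
Hypothesis h_pi : happly h (power_pattern S k x n) = wword zero one l i.
Hypothesis h_neq_nil : forall j, j <= k -> h (x j) != [::].

Let pi := power_pattern S k x n.
Let ps := [seq (h (x j), n j) | j <- iota 0 k.+1].
Let ts := runs i (iota 1 l).

(* plen g: length of h(x_0^(n_0) ... x_(g-1)^(n_(g-1)));
   wlen j: length of (01)^(i_1) ... (0^(j-1) 1)^(i_(j-1)). *)
Let plen (g : nat) : nat := size (powers (take g ps)).
Let wlen (j : nat) : nat := \sum_(1 <= t < j) t.+1 * i t.

Lemma nth_ps j : j <= k -> nth ([::], 0) ps j = (h (x j), n j).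
Proof. by move=> j_le; rewrite (nth_map 0) ?size_iota // nth_iota. Qed.

Lemma size_ps : size ps = k.+1.
Proof. by rewrite size_map size_iota. Qed.

Lemma factorisation_of_w : exists tss : seq (seq nat), [/\ size tss = size ps,
   ts = flatten tss,
   (forall g, powers (take g ps) = units zero one (flatten (take g tss))) &
   (forall q, q < size ps -> exists a t, [/\ 0 < a,
      (nth ([::], 0) ps q).1 = units zero one (nseq a t) &
      nth [::] tss q = nseq (a * (nth ([::], 0) ps q).2) t])].
Proof.
apply: powers_units_factorisation => //.
- exact/sorted_runs/iota_sorted.
- apply/allP => p /mapP [j]; rewrite mem_iota add0n ltnS => j_le ->.
  by rewrite /proper_power /= h_neq_nil ?n_gt1.
- by rewrite -happly_blocks -wword_units.
Qed.

Lemma images_are_blocks j : j <= k ->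
  exists j' i', [/\ 1 <= j' <= l, 1 <= i' <= i j' & h (x j) = blk zero one j' i'].
Proof.
move=> j_le; have [tss [tss_size ts_eq _ tss_nth]] := factorisation_of_w.
have [|a [t [a0 hxj tss_j]]] := tss_nth j; first by rewrite size_ps.
rewrite nth_ps //= in hxj tss_j.
have an_le : a * n j <= (t \in iota 1 l) * i t.
  rewrite -count_runs ?iota_uniq // -/ts ts_eq -(cat_take_drop j tss).
  rewrite (drop_nth [::]) ?tss_size ?size_ps // flatten_cat !count_cat /= tss_j.
  by rewrite count_nseq /= eqxx mul1n; lia.
have n_pos : 0 < n j by apply: ltnW (n_gt1 j_le).
case: (boolP (t \in iota 1 l)) an_le => [|_]; last by rewrite mul0n leqn0 muln_eq0; lia.
rewrite mem_iota add1n ltnS mul1n => t_range an_le.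
exists t, a; rewrite t_range a0 hxj blk_units; split => //.
by apply: leq_trans an_le; apply: leq_pmulr.
Qed.

Lemma plen_mono : {homo plen : g g' / g <= g'}.
Proof. exact: size_powers_take_mono. Qed.

Lemma Ihpi_Jint g : g <= k -> Ihpi h pi (Jint n g) = ((plen g).+1, plen g.+1).
Proof.
move=> g_le; rewrite /Ihpi /Jint /= !happly_take_power_pattern //; last exact: leqW.
by rewrite /plen /ps -!map_take !take_iota !(minn_idPl _) //; apply: leqW.
Qed.

Lemma wlen_aligned j : j <= l.+1 -> exists2 g, g <= k.+1 & plen g = wlen j.
Proof.
move=> j_le; have [tss [tss_size ts_eq tss_take tss_nth]] := factorisation_of_w.
have sorted_tss : sorted leq (flatten tss).
  by rewrite -ts_eq; exact/sorted_runs/iota_sorted.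
have const_tss s : s \in tss -> exists c t, s = nseq c t.
  case/(nthP [::]) => q q_lt <-; rewrite tss_size in q_lt.
  by have [a [t [_ _ ->]]] := tss_nth q q_lt; exists (a * (nth ([::], 0) ps q).2), t.
have [g g_le tss_g] := runs_threshold j sorted_tss const_tss.
exists g; first by rewrite -size_ps -tss_size.
rewrite /plen tss_take tss_g -ts_eq filter_runs size_units_runs.
rewrite /wlen (big_nat_widen _ _ _ _ _ j_le) /index_iota subn1 /= [RHS]big_mkcond.
by apply: eq_bigr => t _; case: (t < j); rewrite ?mul1n ?mul0n ?muln0.
Qed.

Lemma blocks_of_w j : 1 <= j <= l ->
  exists g hj, [/\ g <= k, hj <= k - g,
    (forall p, in_itv (Iint i j) p <->
       exists2 t, t <= hj & in_itv (Ihpi h pi (Jint n (g + t))) p)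
  & (forall t1 t2 p, t1 <= hj -> t2 <= hj -> t1 != t2 ->
       in_itv (Ihpi h pi (Jint n (g + t1))) p ->
       ~~ in_itv (Ihpi h pi (Jint n (g + t2))) p)].
Proof.
move=> j_range.
have [|g1 g1_le plen_g1] := wlen_aligned (j := j); first by lia.
have [|g2 g2_le plen_g2] := wlen_aligned (j := j.+1); first by lia.
have wlen_lt : wlen j < wlen j.+1.
  rewrite /wlen big_nat_recr /=; last by case/andP: j_range.
  by rewrite -[X in X < _]addn0 ltn_add2l muln_gt0 i_gt0.
have g_lt : g1 < g2.
  by rewrite ltnNge; apply: contraL wlen_lt => /plen_mono; rewrite plen_g1 plen_g2 -leqNgt.
have [hj g2_eq] : exists hj, g2 = g1 + hj.+1 by exists (g2 - g1).-1; lia.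
subst g2; exists g1, hj.
have Ihpi_eq t : t <= hj ->
    Ihpi h pi (Jint n (g1 + t)) = ((plen (g1 + t)).+1, plen (g1 + t).+1).
  by move=> t_le; apply: Ihpi_Jint; lia.
split; try lia.
- move=> p; change (Iint i j) with ((wlen j).+1, wlen j.+1).
  rewrite -plen_g1 -plen_g2 itv_cover; last exact: plen_mono.
  by split=> -[t t_le p_in]; exists t; rewrite ?Ihpi_eq // in p_in *.
- move=> t1 t2 p t1_le t2_le t12; rewrite !Ihpi_eq //.
  by apply: itv_disjoint; [exact: plen_mono | rewrite eqn_add2l].
Qed.

End FactorisationOfW.

Theorem mainTheorem11 (Sigma : finType) (zero one : Sigma) (m : nat)
  (k : nat) (x n : nat -> nat) (l : nat) (i : nat -> nat) (h : subst Sigma) :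
  zero != one ->
  2 <= m ->
  (forall a b, a <= k -> b <= k -> x a = x b -> a = b) ->
  (forall j, j <= k -> 2 <= n j <= m) ->
  0 < l ->
  (forall j, 1 <= j <= l -> 0 < i j) ->
  inL (power_pattern Sigma k x n) (wword zero one l i) ->
  happly h (power_pattern Sigma k x n) = wword zero one l i ->
  (forall j, j <= k -> h (x j) != [::]) ->
  (forall j, j <= k ->
     exists j' i', [/\ 1 <= j' <= l, 1 <= i' <= i j' & h (x j) = blk zero one j' i'])
  /\
  (forall j, 1 <= j <= l ->
     exists g hj, [/\ g <= k, hj <= k - g,
       (forall p, in_itv (Iint i j) p <->
          exists2 t, t <= hj & in_itv (Ihpi h (power_pattern Sigma k x n) (Jint n (g + t))) p)
     & (forall t1 t2 p, t1 <= hj -> t2 <= hj -> t1 != t2 ->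
          in_itv (Ihpi h (power_pattern Sigma k x n) (Jint n (g + t1))) p ->
          ~~ in_itv (Ihpi h (power_pattern Sigma k x n) (Jint n (g + t2))) p)]).
Proof.
move=> zero_neq_one _ _ n_range _ i_gt0 _ h_pi h_neq_nil.
have n_gt1 j : j <= k -> 1 < n j by move=> /n_range /andP[].
split=> j.
- exact: (images_are_blocks zero_neq_one n_gt1 h_pi h_neq_nil).
- exact: (blocks_of_w zero_neq_one n_gt1 i_gt0 h_pi h_neq_nil).
Qed.
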